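(* Let $n\ge1$ and $\pi\in\mathcal I^C_{2n}(321)$. Then $$\mathrm{Des}^+(\pi)=\{i\in [n] : i\in E_{\pi}\text{ and } i+1\notin E_{\pi}\}.$$ (In particular $n\in\mathrm{Des}^+(\pi)$ if and only if $n\in E_\pi$.)
   Context: $[n]=\{1,\dots,n\}$. A permutation $\pi\in\mathcal S_m$ is centrosymmetric if $\pi(i)+\pi(m+1-i)=m+1$ for all $i$; $\mathcal I^C_{m}(321)$ is the set of centrosymmetric involutions in $\mathcal S_m$ avoiding $321$. A descent of $\pi$ is a position $i$ with $\pi(i)>\pi(i+1)$; for $\pi\in\mathcal S_{2n}$, $\mathrm{Des}^+(\pi)$ is the set of descents lying in $[n]$. $E_\pi=\{i\in[n]:\pi(i)>i\}$ is the set of excedances of $\pi$ lying in $[n]$. *)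

From mathcomp Require Import all_boot all_order all_fingroup.
Set Implicit Arguments. Unset Strict Implicit. Unset Printing Implicit Defensive.

(* Permutations of [m] = {1..m} are represented by 'S_m (permutations of 'I_m = {0..m-1});
   pval p i is the 1-based value pi(i) for 1 <= i <= m. *)
Definition pval (m : nat) (p : 'S_m) (i : nat) : nat :=
  match m return 'S_m -> nat with
  | 0 => fun _ => 0
  | m'.+1 => fun q => (q (inord i.-1 : 'I_m'.+1)).+1
  end p.

Definition centrosymmetric (m : nat) (p : 'S_m) : Prop :=
  forall i, 1 <= i <= m -> pval p i + pval p (m.+1 - i) = m.+1.

Definition involution (m : nat) (p : 'S_m) : Prop := (p * p)%g = 1%g.

Definition avoids321 (m : nat) (p : 'S_m) : Prop :=
  ~ exists i j k : 'I_m, [/\ i < j, j < k & p k < p j < p i].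

Definition cent_inv_321 (m : nat) (p : 'S_m) : Prop :=
  [/\ centrosymmetric p, involution p & avoids321 p].

Definition DesPlus (n : nat) (p : 'S_(n.*2)) : pred nat :=
  fun i => (1 <= i <= n) && (pval p i.+1 < pval p i).

Definition Exc (n : nat) (p : 'S_(n.*2)) : pred nat :=
  fun i => (1 <= i <= n) && (i < pval p i).

From Pilot Require Import Defs.
From mathcomp Require Import all_boot all_order all_fingroup.
From mathcomp Require Import zify.
Set Implicit Arguments. Unset Strict Implicit.

(* A 321-avoiding permutation has a descent at [j] exactly when [j] is an
   excedance and [j+1] is not.  If [j] and [j+1] are both excedances and
   [q(j+1) < q(j)], then fewer than [q(j+1)] positions lie before [j+1], so some
   later position carries a value below [q(j+1)], completing a 321; dually when
   neither is an excedance.  For [j = n] in [S_2n] centrosymmetry gives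
   [pi(n) + pi(n+1) = 2n+1], so the descent at [n] is just the excedance at [n]. *)

Lemma card_ltn_ord m t : t <= m -> #|[set x : 'I_m | x < t]| = t.
Proof.
move=> le_tm.
have -> : [set x : 'I_m | x < t] = widen_ord le_tm @: [set: 'I_t].
  apply/setP => x; rewrite !inE; apply/idP/imsetP => [lt_xt | [y _ ->]].
    by exists (Ordinal lt_xt) => //; apply: val_inj.
  by rewrite /= ltn_ord.
rewrite card_imset ?cardsT ?card_ord //.
by move=> a b /(congr1 val) /= /val_inj.
Qed.

Lemma card_perm_ltn m (q : 'S_m) t : t <= m -> #|[set x | q x < t]| = t.
Proof.
move=> le_tm; rewrite -[RHS](card_ltn_ord le_tm).
rewrite -(card_preimset [set x : 'I_m | x < t] (@perm_inj _ q)).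
by apply: eq_card => x; rewrite !inE.
Qed.

Lemma card_perm_gtn m (q : 'S_m) (y : 'I_m) : #|[set x | y < q x]| = m - y.+1.
Proof.
have <- : #|~: [set x | q x < y.+1]| = #|[set x | y < q x]|.
  by apply: eq_card => x; rewrite !inE ltnNge negbK.
by have := cardsC [set x | q x < y.+1]; rewrite card_ord card_perm_ltn //; lia.
Qed.

Lemma exc_later_smaller m (q : 'S_m) (k : 'I_m) :
  k < q k -> exists2 l : 'I_m, k < l & q l < q k.
Proof.
move=> exc_k.
have [/existsP[l /andP[lt_kl lt_ql]] | /existsPn no_l] :=
  boolP [exists l : 'I_m, (k < l) && (q l < q k)]; first by exists l.
have sub : [set x | q x < q k] \subset [set x : 'I_m | x < k].
  apply/subsetP => x; rewrite !inE => lt_qx; have := no_l x.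
  rewrite lt_qx andbT -leqNgt leq_eqVlt => /orP[/eqP/val_inj eq_xk | //].
  by rewrite eq_xk ltnn in lt_qx.
have := subset_leq_card sub.
rewrite card_perm_ltn ?card_ltn_ord ?(ltnW (ltn_ord _)) //.
by rewrite leqNgt exc_k.
Qed.

Lemma nonexc_earlier_larger m (q : 'S_m) (j k : 'I_m) :
  j < k -> q j <= j -> q k < q j -> exists2 l : 'I_m, l < j & q j < q l.
Proof.
move=> lt_jk nexc_j lt_qkj.
have [/existsP[l /andP[lt_lj lt_ql]] | /existsPn no_l] :=
  boolP [exists l : 'I_m, (l < j) && (q j < q l)]; first by exists l.
have sub : [set x | q j < q x] \subset [set x : 'I_m | j < x] :\ k.
  apply/subsetP => x; rewrite !inE => lt_qx; have := no_l x.
  rewrite lt_qx andbT -leqNgt leq_eqVlt => /orP[/eqP/val_inj eq_xj | ->].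
    by rewrite eq_xj ltnn in lt_qx.
  by rewrite andbT; apply: contraTneq lt_qx => ->; rewrite -leqNgt ltnW.
have card_after : #|[set x : 'I_m | j < x]| = m - j.+1.
  by rewrite -(card_perm_gtn 1 j); apply: eq_card => x; rewrite !inE perm1.
exfalso; have := cardsD1 k [set x : 'I_m | j < x]; rewrite inE lt_jk card_after add1n.
have := subset_leq_card sub; rewrite card_perm_gtn.
move: #|_ :\ k| => rest; have := ltn_ord k; lia.
Qed.

Lemma avoids321_descentE m (q : 'S_m) (j k : 'I_m) :
  avoids321 q -> k = j.+1 :> nat -> (q k < q j) = (j < q j) && (q k <= k).
Proof.
move=> av def_k.
have lt_jk : j < k by rewrite def_k.
have neq_qjk : q j != q k :> nat.
  by apply: contraTneq lt_jk => /val_inj/perm_inj ->; rewrite ltnn.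
have [exc_j|nexc_j] := ltnP j (q j); have [exc_k|nexc_k] := ltnP k (q k) => /=.
- apply/negP => desc; have [l lt_kl lt_ql] := exc_later_smaller exc_k.
  by apply: av; exists j, k, l; rewrite lt_jk lt_kl lt_ql desc.
- move: neq_qjk; rewrite neq_ltn => /orP[lt_qjk|//].
  by rewrite def_k in nexc_k; lia.
- by rewrite def_k in exc_k; lia.
- apply/negP => desc; have [l lt_lj lt_ql] := nonexc_earlier_larger lt_jk nexc_j desc.
  by apply: av; exists l, j, k; rewrite lt_lj lt_jk lt_ql desc.
Qed.

(* [Defs.pval] is qualified because perm.v also exports a [pval]. *)
Lemma avoids321_pval_descentE m (p : 'S_m) i : avoids321 p -> 0 < i < m ->
  (Defs.pval p i.+1 < Defs.pval p i) = (i < Defs.pval p i) && (Defs.pval p i.+1 <= i.+1).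
Proof.
case: m p => [|m] p av /andP[i_gt0 lt_im] //=.
have val_j : (inord i.-1 : 'I_m.+1) = i.-1 :> nat by rewrite inordK //; lia.
have val_k : (inord i : 'I_m.+1) = i :> nat by rewrite inordK.
rewrite !ltnS (avoids321_descentE av (j := inord i.-1) (k := inord i)); last first.
  by rewrite val_j val_k prednK.
by rewrite val_j val_k -ltnS prednK.
Qed.

Lemma centrosymmetric_mid_descentE n (p : 'S_(n.*2)) : 0 < n -> centrosymmetric p ->
  (Defs.pval p n.+1 < Defs.pval p n) = (n < Defs.pval p n).
Proof.
move=> n_gt0 cs; have mirror_n : n.*2.+1 - n = n.+1 by lia.
have le_n2n : 0 < n <= n.*2 by rewrite n_gt0 -addnn leq_addr.
have := cs n le_n2n; rewrite mirror_n.
by move: (Defs.pval p n) (Defs.pval p n.+1) => a b sum_ab; apply/idP/idP; lia.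
Qed.

Theorem mainTheorem6 (n : nat) (p : 'S_(n.*2)) :
  1 <= n -> cent_inv_321 p ->
  forall i : nat,
    DesPlus p i = [&& 1 <= i <= n, Exc p i & ~~ Exc p i.+1].
Proof.
move=> n_gt0 [cs _ av] i; rewrite /DesPlus /Exc.
have [/andP[i_gt0 le_in]|] //= := boolP (1 <= i <= n).
have [lt_in|le_ni] /= := ltnP i n.
  rewrite -leqNgt avoids321_pval_descentE // i_gt0 /=.
  by rewrite -addnn; apply: leq_trans (leq_addr _ _).
have -> : i = n by apply/eqP; rewrite eqn_leq le_in.
by rewrite centrosymmetric_mid_descentE // andbT.
Qed.
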